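(* Fix $t\ge 0$ and let $\sigma\subseteq\mathcal C$ and $\tau\subseteq\mathcal Y^\circ$ be finite, nonempty subsets. Set $A:=\max_{x\in\sigma} r_{\mathcal C}(x)$, $B:=\max_{y\in\tau} r_{\mathcal Y}(y)$. Then $\sigma\cup\tau$ is a simplex of $\mathrm{VR}_t(\mathcal X,d_\theta)$ if and only if: (1) $\sigma$ is a simplex of $\mathrm{VR}_t(\mathcal C,\beta)$; (2) $\tau$ is a simplex of $\mathrm{VR}_t(\mathcal Y^\circ,d_{\mathrm{reg}})$; (3) $\|(A,B)\|_{\ell^p}\le t$.
   Context: Let $A$ be a unital $C^*$-algebra, $H$ a Hilbert space, $\mathcal X=\mathrm{CB}(A,B(H))$, $\mathcal C=\mathrm{CP}(A,B(H))$ with Bures distance $\beta$. Fix $\theta\in\mathcal C$, $\lambda>0$, $\alpha\in(0,1]$, $p\in[1,\infty]$ and let $d_\theta$ be the Bures--Kuratowski metric $\beta^{BK}_{\theta,\lambda,p,\alpha}$ on $\mathcal X$. Let $\mathcal Y=(\mathcal X\setminus\mathcal C)\sqcup\{\ast\}$ with metric $d_{\mathrm{reg}}(x,y)=\lambda\delta_{\mathrm{reg}}(x,y)^\alpha$, $d_{\mathrm{reg}}(x,\ast)=\lambda\delta_{\mathrm{reg}}(x,0)^\alpha$, where $\delta_{\mathrm{reg}}$ is the regular-representation metric, and $\mathcal Y^\circ=\mathcal Y\setminus\{\ast\}\cong\mathcal X\setminus\mathcal C$. Then $d_\theta=\beta$ on $\mathcal C$, $d_\theta=d_{\mathrm{reg}}$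 on $\mathcal Y^\circ$, and $d_\theta(x,y)=\|(r_{\mathcal C}(x),r_{\mathcal Y}(y))\|_{\ell^p}$ for $x\in\mathcal C$, $y\in\mathcal Y$, where $r_{\mathcal C}(x)=\beta(x,\theta)$ and $r_{\mathcal Y}(y)=d_{\mathrm{reg}}(y,\ast)$. For a metric space $(Z,d)$, $\mathrm{VR}_t(Z,d)$ is the simplicial complex on $Z$ whose simplices are finite subsets of diameter $\le t$. *)

From HB Require Import structures.
From mathcomp Require Import all_boot all_order all_algebra.
From mathcomp Require Import all_classical all_reals all_analysis.
Set Implicit Arguments. Unset Strict Implicit. Unset Printing Implicit Defensive.
Import Order.TTheory GRing.Theory Num.Theory.
Local Open Scope classical_set_scope.
Local Open Scope ring_scope.

Definition lpnorm2 (R : realType) (p : \bar R) (a b : R) : R :=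
  match p with
  | +oo%E => Num.max `|a| `|b|
  | (r%:E)%E => powR (powR `|a| r + powR `|b| r) r^-1
  | -oo%E => 0
  end.

Definition VR_simplex (R : realType) (X : Type) (Z : set X) (d : X -> X -> R)
  (t : R) (s : set X) : Prop :=
  [/\ s `<=` Z, finite_set s, s !=set0 &
      forall x y, s x -> s y -> d x y <= t].

From HB Require Import structures.
From mathcomp Require Import all_boot all_order all_algebra.
From mathcomp Require Import all_classical all_reals all_analysis.
Import Order.TTheory GRing.Theory Num.Theory numFieldTopology.Exports.
Local Open Scope classical_set_scope.
Local Open Scope ring_scope.

(* A finite nonempty set is a Vietoris-Rips simplex iff all its pairwise
   distances are at most t.  For sigma `|` tau these are the beta-distances
   inside sigma, the d_reg-distances inside tau, and the cross distances
   ||(beta(x,theta), r_Y(y))||_p.  The l^p norm is monotone in each nonnegative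
   argument and a finite set of reals contains its supremum, so all cross
   distances are at most t iff ||(A, B)||_p <= t. *)

Lemma finite_has_sup (R : realType) (S : set R) :
  finite_set S -> S !=set0 -> has_sup S.
Proof. by move=> Sfin S0; apply: compact_has_sup => //; exact: finite_compact. Qed.

Lemma finite_sup_mem (R : realType) (S : set R) :
  finite_set S -> S !=set0 -> S (sup S).
Proof.
move=> Sfin S0; have [_ Sub] : has_sup S by exact: finite_has_sup.
exact: (compact_closed (@Rhausdorff R) (finite_compact Sfin) (closure_sup S0 Sub)).
Qed.

Lemma finite_sup_ub (R : realType) (S : set R) :
  finite_set S -> ubound S (sup S).
Proof.
move=> Sfin x Sx; apply: sup_upper_bound => //.
by apply: finite_has_sup => //; exists x.
Qed.

Lemma ler_lpnorm2 (R : realType) (p : \bar R) (a b a' b' : R) : (1 <= p)%E ->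
  0 <= a -> a <= a' -> 0 <= b -> b <= b' -> lpnorm2 p a b <= lpnorm2 p a' b'.
Proof.
move=> p1 a0 aa' b0 bb'.
have a'0 : 0 <= a' by apply: le_trans aa'.
have b'0 : 0 <= b' by apply: le_trans bb'.
case: p p1 => [r||] //= p1; last by rewrite !ger0_norm // ge_max !le_max aa' bb' orbT.
have r0 : 0 < r by rewrite lee_fin in p1; exact: lt_le_trans p1.
rewrite !ger0_norm //; apply: ge0_ler_powR; first by rewrite invr_ge0 ltW.
- by rewrite nnegrE addr_ge0 // powR_ge0.
- by rewrite nnegrE addr_ge0 // powR_ge0.
- by apply: lerD; apply: ge0_ler_powR; rewrite ?nnegrE // ltW.
Qed.

Lemma lpnorm2_sup_leP {R : realType} {T U : Type} {p : \bar R} {t : R}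
    {f : T -> R} {g : U -> R} {S1 : set T} {S2 : set U} :
  (1 <= p)%E -> (forall x, S1 x -> 0 <= f x) -> (forall y, S2 y -> 0 <= g y) ->
  finite_set S1 -> S1 !=set0 -> finite_set S2 -> S2 !=set0 ->
  lpnorm2 p (sup (f @` S1)) (sup (g @` S2)) <= t <->
  (forall x y, S1 x -> S2 y -> lpnorm2 p (f x) (g y) <= t).
Proof.
move=> p1 f0 g0 S1fin S10 S2fin S20; split=> [le_supt x y S1x S2y|le_t].
  apply: le_trans le_supt; apply: ler_lpnorm2 => //.
  - exact: f0.
  - by apply: finite_sup_ub; [exact: finite_image | exists x].
  - exact: g0.
  - by apply: finite_sup_ub; [exact: finite_image | exists y].
have [x S1x <-] : (f @` S1) (sup (f @` S1)).
  by apply: finite_sup_mem; [exact: finite_image | exact: image_nonempty].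
have [y S2y <-] : (g @` S2) (sup (g @` S2)).
  by apply: finite_sup_mem; [exact: finite_image | exact: image_nonempty].
exact: le_t.
Qed.

Definition diam_le {R : numDomainType} {X : Type} (d : X -> X -> R) (t : R)
    (s : set X) : Prop :=
  forall x y, s x -> s y -> d x y <= t.

Lemma VR_simplexE (R : realType) (X : Type) (Z : set X) (d : X -> X -> R)
    (t : R) (s : set X) :
  s `<=` Z -> finite_set s -> s !=set0 -> VR_simplex Z d t s = diam_le d t s.
Proof.
by move=> sZ sfin s0; rewrite propeqE; split=> [[]|diam_s] //; split.
Qed.

Lemma eq_diam_le {R : numDomainType} {X : Type} {d d' : X -> X -> R} {t : R}
    {s : set X} :
  (forall x y, s x -> s y -> d x y = d' x y) -> diam_le d t s = diam_le d' t s.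
Proof.
move=> dd'; rewrite propeqE; split=> diam_s x y sx sy.
  by rewrite -dd' //; exact: diam_s.
by rewrite dd' //; exact: diam_s.
Qed.

Lemma diam_leU (R : numDomainType) (X : Type) (d : X -> X -> R) (t : R)
    (s1 s2 : set X) :
  (forall x y, d x y = d y x) ->
  diam_le d t (s1 `|` s2) =
  [/\ diam_le d t s1, diam_le d t s2 & forall x y, s1 x -> s2 y -> d x y <= t].
Proof.
move=> dsym; rewrite propeqE; split.
  by move=> diam_s; split=> x y sx sy; apply: diam_s; by [left | right].
move=> [diam_s1 diam_s2 cross] x y [s1x|s2x] [s1y|s2y].
- exact: diam_s1.
- exact: cross.
- by rewrite dsym; exact: cross.
- exact: diam_s2.
Qed.

Theorem proposition6p3 (R : realType) (X : Type)
  (C : set X)                      (* the cone CP(A,B(H)) inside X = CB(A,B(H)) *)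
  (d beta dreg : X -> X -> R)      (* d_theta, Bures distance, d_reg on Y° = X \ C *)
  (rY : X -> R)                    (* r_Y(y) = d_reg(y, * ) *)
  (theta : X) (p : \bar R) (t : R)
  (sigma tau : set X) :
  C theta -> (1 <= p)%E ->
  (forall x y, d x y = d y x) ->
  (forall x y, 0 <= beta x y) -> (forall y, 0 <= rY y) ->
  (forall x y, C x -> C y -> d x y = beta x y) ->
  (forall x y, ~ C x -> ~ C y -> d x y = dreg x y) ->
  (forall x y, C x -> ~ C y -> d x y = lpnorm2 p (beta x theta) (rY y)) ->
  0 <= t ->
  sigma `<=` C -> finite_set sigma -> sigma !=set0 ->
  tau `<=` ~` C -> finite_set tau -> tau !=set0 ->
  let A := sup [set beta x theta | x in sigma] in
  let B := sup [set rY y | y in tau] in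
  VR_simplex setT d t (sigma `|` tau) <->
  [/\ VR_simplex C beta t sigma,
      VR_simplex (~` C) dreg t tau &
      lpnorm2 p A B <= t].
Proof.
move=> _ p1 dsym beta0 rY0 dCC dYY dCY _ sC sfin s0 tC tfin t0 A B.
have sigma_d x y : sigma x -> sigma y -> d x y = beta x y.
  by move=> /sC Cx /sC Cy; exact: dCC.
have tau_d x y : tau x -> tau y -> d x y = dreg x y.
  by move=> /tC nCx /tC nCy; exact: dYY.
have cross_d x y : sigma x -> tau y -> d x y = lpnorm2 p (beta x theta) (rY y).
  by move=> /sC Cx /tC nCy; exact: dCY.
have cross : (forall x y, sigma x -> tau y -> d x y <= t) = (lpnorm2 p A B <= t).
  rewrite propeqE (lpnorm2_sup_leP p1 (fun x _ => beta0 x theta) (fun y _ => rY0 y)) //.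
  by split=> le_t x y sx ty; move: (le_t x y sx ty); rewrite cross_d.
have sUt_fin : finite_set (sigma `|` tau) by rewrite finite_setU.
have sUt0 : sigma `|` tau !=set0 by case: s0 => x sx; exists x; left.
rewrite VR_simplexE // diam_leU // !VR_simplexE //.
by rewrite (eq_diam_le sigma_d) (eq_diam_le tau_d) cross.
Qed.
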